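(* Let $q$ be a prime power, $k\ge 3$ and $n\ge \frac{k(k+1)}{2}+k-3$ with $n\le q$. Then for every vector $\boldsymbol\alpha=(\alpha_1,\dots,\alpha_n)$ of pairwise distinct elements of $\mathbb F_q$, the Reed–Solomon code $\mathrm{RS}_{\boldsymbol\alpha}(n,k)$ has insdel distance at most $2n-4k+4$.
   Context: $\mathrm{RS}_{\boldsymbol\alpha}(n,k)=\{(f(\alpha_1),\dots,f(\alpha_n)): f\in\mathbb F_q[x],\ \deg f<k\}$. For $\mathbf u,\mathbf v\in\mathbb F_q^n$, the insdel distance $d_I(\mathbf u,\mathbf v)$ is the minimum number of insertions and deletions transforming $\mathbf u$ into $\mathbf v$; equivalently $d_I(\mathbf u,\mathbf v)=2n-2\ell_{\rm LCS}(\mathbf u,\mathbf v)$ where $\ell_{\rm LCS}$ is the length of a longest common subsequence. The insdel distance of a code is the minimum insdel distance between distinct codewords. *)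

From HB Require Import structures.
From mathcomp Require Import all_boot all_order all_algebra all_field.
Set Implicit Arguments. Unset Strict Implicit. Unset Printing Implicit Defensive.
Import GRing.Theory.
Local Open Scope ring_scope.

Definition lcs_len (T : eqType) (u v : seq T) : nat :=
  \max_(m : (size u).-tuple bool | subseq (mask m u) v) size (mask m u).

(* Insdel distance between two words of the same length n. *)
Definition insdel_dist (T : eqType) (u v : seq T) : nat :=
  (2 * size u - 2 * lcs_len u v)%N.

(* Reed-Solomon code RS_alpha(n,k): evaluations of all polynomials of degree < k
   (each is Poly c for a unique coefficient k-tuple c) at alpha_1..alpha_n. *)
Definition RS_code (F : finFieldType) (n k : nat) (alpha : n.-tuple F)
  : {set n.-tuple F} :=
  [set [tuple of map (fun a => (Poly (c : seq F)).[a]) alpha] | c : k.-tuple F].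

(* Insdel distance of a code: minimum insdel distance between distinct codewords
   (with the trivial upper bound 2n as default for codes with < 2 words). *)
Definition code_insdel_dist (F : finFieldType) (n : nat) (C : {set n.-tuple F}) : nat :=
  \big[minn/(2 * n)%N]_(p in setX C C | p.1 != p.2) insdel_dist (p.1 : seq F) p.2.

From HB Require Import structures.
From mathcomp Require Import all_boot all_order all_algebra all_field.
From mathcomp Require Import zify.
Set Implicit Arguments. Unset Strict Implicit. Unset Printing Implicit Defensive.
Import Order.TTheory GRing.Theory.
Local Open Scope ring_scope.

(* The coefficients of a pair (f, g) of polynomials of degree < k are 2k
   unknowns subject to the 2k - 1 linear conditions f(a_0) = 0 and
   f(a_j) = g(a_(j+1)) for j < 2k - 2, so a nonzero solution exists; f = g
   would force f to vanish at a_0, ..., a_(k-1), so f <> g.  The codewords of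
   f and g then share the subsequence f(a_0), ..., f(a_(2k-3)), hence their
   insdel distance is at most 2n - 2(2k - 2). *)

Lemma lcs_len_take (T : eqType) (u v : seq T) (m : nat) :
  (m <= size u)%N -> subseq (take m u) v -> (m <= lcs_len u v)%N.
Proof.
move=> le_m_u sub_uv.
have size_b : size (nseq m true ++ nseq (size u - m) false) == size u.
  by rewrite size_cat !size_nseq subnKC.
have take_mask : mask (Tuple size_b) u = take m u.
  rewrite /= -{2}(cat_take_drop m u) mask_cat ?size_nseq ?size_takel //.
  by rewrite mask_false cats0 mask_true // size_takel.
apply: leq_trans (leq_bigmax_cond (Tuple size_b) _); rewrite take_mask //.
by rewrite size_takel.
Qed.

Lemma lcs_len_shift (T : eqType) (x0 : T) (u v : seq T) (m : nat) :
  (m <= size u)%N -> (m < size v)%N ->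
  (forall j, (j < m)%N -> nth x0 u j = nth x0 v j.+1) -> (m <= lcs_len u v)%N.
Proof.
move=> le_m_u lt_m_v uv_shift; apply: lcs_len_take => //.
have -> : take m u = take m (drop 1 v).
  apply: (@eq_from_nth _ x0) => [|j]; rewrite !size_takel ?size_drop ?subn1 //.
    by rewrite -ltnS (ltn_predK lt_m_v).
  by move=> lt_jm; rewrite !nth_take // nth_drop uv_shift.
exact: subseq_trans (take_subseq _ _) (drop_subseq _ _).
Qed.

Lemma code_insdel_dist_le (F : finFieldType) (n : nat) (C : {set n.-tuple F})
    (u v : n.-tuple F) :
  u \in C -> v \in C -> u != v ->
  (code_insdel_dist C <= insdel_dist (u : seq F) v)%N.
Proof.
move=> uC vC uv.
by apply: (@bigmin_le_cond _ nat _ _ (u, v)); rewrite /= in_setX uC vC.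
Qed.

Lemma RS_code_horner (F : finFieldType) (n k : nat) (alpha : n.-tuple F)
    (p : {poly F}) :
  (size p <= k)%N -> [tuple of map (horner p) alpha] \in RS_code k alpha.
Proof.
move=> le_p_k; apply/imsetP; exists [tuple p`_i | i < k] => //.
have -> : Poly [tuple p`_i | i < k] = p.
  apply/polyP => i; rewrite coef_Poly.
  have [lt_i_k | le_k_i] := ltnP i k; first exact: (nth_mktuple _ _ (Ordinal lt_i_k)).
  by rewrite !nth_default ?size_tuple // (leq_trans le_p_k).
by [].
Qed.

Lemma horner_map_inj (F : idomainType) (s : seq F) (f g : {poly F}) :
  uniq s -> (size f <= size s)%N -> (size g <= size s)%N ->
  map (horner f) s = map (horner g) s -> f = g.
Proof.
move=> s_uniq le_f_s le_g_s /eq_in_map fg_s; apply/eqP; rewrite -subr_eq0.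
apply/eqP/(roots_geq_poly_eq0 _ s_uniq).
  by apply/allP => x xs; rewrite rootE hornerD hornerN fg_s ?subrr.
by rewrite (leq_trans (size_polyD _ _)) // size_polyN geq_max le_f_s.
Qed.

Lemma mulmx_Vandermonde (R : comNzRingType) (d n : nat) (u : 'rV[R]_d)
    (x : 'rV[R]_n) j :
  (u *m Vandermonde d x) 0 j = (rVpoly u).[x 0 j].
Proof. by rewrite !mxE horner_poly; apply: eq_bigr => i _; rewrite valK mxE. Qed.

Lemma nonzero_left_kernel (F : fieldType) (m n : nat) (A : 'M[F]_(m, n)) :
  (n < m)%N -> exists2 u : 'rV_m, u != 0 & u *m A = 0.
Proof.
move=> lt_nm; have /rowV0Pn[u /sub_kermxP uA u0] : kermx A != 0.
  by rewrite kermx_eq0 /row_free neq_ltn (leq_ltn_trans (rank_leq_col A)).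
by exists u.
Qed.

Lemma chain_poly_eq0 (F : idomainType) (k : nat) (a : seq F) (f : {poly F}) :
  uniq a -> (k <= size a)%N -> (size f <= k)%N ->
  f.[a`_0] = 0 -> (forall j, (j.+1 < k)%N -> f.[a`_j] = f.[a`_j.+1]) -> f = 0.
Proof.
move=> a_uniq le_k_a le_f_k f_a0 f_chain.
have f_root j : (j < k)%N -> f.[a`_j] = 0.
  by elim: j => // j IHj lt_jk; rewrite -f_chain // IHj // ltnW.
apply: (roots_geq_poly_eq0 _ (take_uniq k a_uniq)); last by rewrite size_takel.
apply/(all_nthP 0) => j; rewrite size_takel // => lt_jk.
by rewrite nth_take // rootE f_root.
Qed.

Lemma exists_shifted_pair_nonzero (F : fieldType) (k : nat) (a : seq F) :
  (0 < k)%N ->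
  exists f g : {poly F}, [/\ (size f <= k)%N, (size g <= k)%N,
    (f != 0) || (g != 0), f.[a`_0] = 0 &
    forall j, (j < 2 * k - 2)%N -> f.[a`_j] = g.[a`_j.+1]].
Proof.
move=> k_gt0; set m := (2 * k - 2)%N.
have fewer_equations : (m + 1 < k + k)%N by rewrite /m; lia.
pose x := \row_(j < m) a`_j; pose y := \row_(j < m) a`_j.+1.
pose z := \row_(j < 1) a`_0.
pose A := row_mx (col_mx (Vandermonde k x) (- Vandermonde k y))
                 (col_mx (Vandermonde k z) 0).
have [u u_neq0] := nonzero_left_kernel A fewer_equations.
rewrite -[u]hsubmxK mul_mx_row !mul_row_col mulmxN mulmx0 addr0 -row_mx0.
move=> /eq_row_mx[shiftE zeroE].
exists (rVpoly (lsubmx u)), (rVpoly (rsubmx u)); split; rewrite ?size_poly //.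
- apply: contraNT u_neq0; rewrite negb_or !negbK => /andP[/eqP ul0 /eqP ur0].
  by rewrite -[u]hsubmxK -[lsubmx u]rVpolyK -[rsubmx u]rVpolyK ul0 ur0 linear0 row_mx0.
- by move/rowP/(_ 0): zeroE; rewrite mulmx_Vandermonde !mxE.
- move=> j lt_jm; move/rowP/(_ (Ordinal lt_jm)): shiftE.
  rewrite mxE [X in _ + X]mxE !mulmx_Vandermonde !mxE.
  by move=> /eqP; rewrite subr_eq0 => /eqP.
Qed.

Lemma exists_shifted_pair (F : fieldType) (k : nat) (a : seq F) :
  uniq a -> (0 < k <= size a)%N ->
  exists f g : {poly F}, [/\ (size f <= k)%N, (size g <= k)%N, f != g &
    forall j, (j < 2 * k - 2)%N -> f.[a`_j] = g.[a`_j.+1]].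
Proof.
move=> a_uniq /andP[k_gt0 le_k_a].
have [f [g [le_f_k le_g_k fg_neq0 f_a0 fg_shift]]] := exists_shifted_pair_nonzero a k_gt0.
exists f, g; split=> //; apply: contraTneq fg_neq0 => f_eq_g.
rewrite -f_eq_g orbb negbK; apply/eqP/(chain_poly_eq0 a_uniq le_k_a le_f_k f_a0).
by move=> j lt_jk; rewrite fg_shift ?f_eq_g //; lia.
Qed.

Theorem theorem3p9 (F : finFieldType) (n k : nat) (alpha : n.-tuple F) :
  (3 <= k)%N ->
  (k * (k + 1) %/ 2 + k - 3 <= n)%N ->
  (n <= #|F|)%N ->
  uniq alpha ->
  (code_insdel_dist (RS_code k alpha) <= 2 * n + 4 - 4 * k)%N.
Proof.
move=> k_ge3 n_large _ alpha_uniq.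
have le_2k1_n : (2 * k - 1 <= n)%N.
  suff : (k + 2 <= k * (k + 1) %/ 2)%N by lia.
  by rewrite leq_divRL //; nia.
have le_k_n : (k <= n)%N by lia.
have k_range : (0 < k <= size alpha)%N by rewrite size_tuple; lia.
have [f [g [le_f_k le_g_k f_neq_g fg_shift]]] := exists_shifted_pair alpha_uniq k_range.
pose wf := [tuple of map (horner f) alpha].
pose wg := [tuple of map (horner g) alpha].
have wf_neq_wg : wf != wg.
  apply: contra f_neq_g => /eqP/(congr1 val)/horner_map_inj-> //.
  1,2: by rewrite size_tuple (leq_trans _ le_k_n).
have lcs_large : (2 * k - 2 <= lcs_len wf wg)%N.
  apply: (@lcs_len_shift F 0); rewrite ?size_tuple; try lia.
  by move=> j lt_jm; rewrite !(nth_map 0) ?fg_shift // size_tuple; lia.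
have dist_small : (insdel_dist wf wg <= 2 * n + 4 - 4 * k)%N.
  by rewrite /insdel_dist size_tuple; lia.
by apply: leq_trans (code_insdel_dist_le _ _ wf_neq_wg) dist_small;
  apply: RS_code_horner.
Qed.
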